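(* Let $k\ge 1$ be an integer and $p>0$ a budget. For $j=1,\dots,k$ let $n_j>0$ (number of training samples of the $j$-th low-fidelity model) with $p-\sum_{j=1}^k n_j>0$, and let $\rho_j(n_j)\in[-1,1]$ and $w_j(n_j)>0$ be given numbers (correlation coefficient with the high-fidelity model and evaluation cost of the $j$-th low-fidelity model), with the conventions $n_0=0$, $\rho_0=1$, $w_0=1$, $\rho_{k+1}=0$, and assume $1=|\rho_0|>|\rho_1(n_1)|>\dots>|\rho_k(n_k)|$. Let $\sigma_0^2>0$. Suppose that for each $j=1,\dots,k$ there are constants $c_{a,j},c_{c,j}>0$, a positive, decreasing, at least twice continuously differentiable $r_{a,j}:(0,\infty)\to(0,\infty)$ and a positive, increasing, at least twice continuously differentiable $r_{c,j}:(0,\infty)\to(0,\infty)$ with $$1-\rho_j^2(n_j)\le c_{a,j}r_{a,j}(n_j),\qquad w_j(n_j)\le c_{c,j}r_{c,j}(n_j).$$ Define $$\mathrm{MSE}=\frac{\sigma_0^2}{p-\sum_{i=1}^k n_i}\left(\sum_{j=0}^k\sqrt{w_j(n_j)\big(\rho_j^2(n_j)-\rho_{j+1}^2(n_{j+1})\big)}\right)^2.$$ Then $$\mathrm{MSE}\le \frac{(k+1)\sigma_0^2}{p_{k-1}-n_k}\Big(\kappa_{k-1}+w_{k-1}(n_{k-1})\,c_{a,k}\,r_{a,k}(n_k)+c_{c,k}\,r_{c,k}(n_k)\Big),$$ where $$p_{k-1}=p-\sum_{j=1}^{k-1}n_j\ (p_0=p),\qquad \kappa_{k-1}=\sum_{j=0}^{k-2}w_j(n_j)\big(1-\rho_{j+1}^2(n_{j+1})\big)\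 (\kappa_0=0).$$
   Context: The quantity $\mathrm{MSE}$ is the mean-squared error of the context-aware multi-fidelity Monte Carlo estimator of $\mathbb{E}[f^{(0)}(\boldsymbol\Theta)]$ built from a high-fidelity model $f^{(0)}$ (output variance $\sigma_0^2$, cost $1$) and $k$ low-fidelity models $f^{(j)}_{n_j}$ trained with $n_j$ high-fidelity evaluations each, after optimal allocation of the remaining budget $p-\sum n_i$ to sampling. *)

From Stdlib Require Import Reals.
From Coquelicot Require Import Coquelicot.
Open Scope R_scope.

Fixpoint sum_lt (f : nat -> R) (m : nat) : R :=
  match m with
  | O => 0
  | S m' => sum_lt f m' + f m'
  end.

(* Extension of the index-1..k data by the conventions
   n_0 = 0, rho_0 = 1, w_0 = 1, rho_(k+1) = 0. *)
Definition rhoE (k : nat) (rho : nat -> R) (j : nat) : R :=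
  match j with
  | O => 1
  | _ => if Nat.eqb j (S k) then 0 else rho j
  end.
Definition wE (w : nat -> R) (j : nat) : R :=
  match j with O => 1 | _ => w j end.

Definition sum_n1 (n : nat -> nat) (m : nat) : R :=
  sum_lt (fun j => INR (n (S j))) m.

Definition MSE (k : nat) (p sigma2 : R) (n : nat -> nat) (rho w : nat -> R) : R :=
  sigma2 / (p - sum_n1 n k) *
  (sum_lt (fun j => sqrt (wE w j * ((rhoE k rho j)^2 - (rhoE k rho (S j))^2))) (S k))^2.

Definition p_red (p : R) (n : nat -> nat) (m : nat) : R := p - sum_n1 n m.

Definition kappa (k : nat) (rho w : nat -> R) (m : nat) : R :=
  sum_lt (fun j => wE w j * (1 - (rhoE k rho (S j))^2)) m.

Definition C2_pos (f : R -> R) : Prop :=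
  forall x, 0 < x ->
    ex_derive f x /\ ex_derive (Derive f) x /\ continuous (Derive_n f 2) x.

Definition nonincreasing_pos (f : R -> R) : Prop :=
  forall x y, 0 < x -> x <= y -> f y <= f x.
Definition nondecreasing_pos (f : R -> R) : Prop :=
  forall x y, 0 < x -> x <= y -> f x <= f y.

(* Write y_j = w_j (rho_j^2 - rho_(j+1)^2) >= 0, so that the bracket in MSE is
   (sum_(j<=k) sqrt y_j)^2.  Cauchy-Schwarz bounds it by (k+1) sum_(j<=k) y_j.
   Since rho_j^2 <= 1, every y_j with j < k is at most w_j (1 - rho_(j+1)^2),
   which sums to kappa_(k-1) + w_(k-1) (1 - rho_k^2); the last one is
   y_k = w_k rho_k^2 <= w_k.  The two model assumptions then bound
   1 - rho_k^2 and w_k, and p_(k-1) - n_k is the denominator of MSE. *)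

From Stdlib Require Import Reals Lra Lia.
From Coquelicot Require Import Coquelicot.
Open Scope R_scope.

Lemma sum_lt_ext (f g : nat -> R) m :
  (forall j, (j < m)%nat -> f j = g j) -> sum_lt f m = sum_lt g m.
Proof.
  induction m as [|m IH]; intros Hfg; simpl; [reflexivity|].
  rewrite IH by (intros; apply Hfg; lia). rewrite Hfg by lia. reflexivity.
Qed.

Lemma sum_lt_le (f g : nat -> R) m :
  (forall j, (j < m)%nat -> f j <= g j) -> sum_lt f m <= sum_lt g m.
Proof.
  induction m as [|m IH]; intros Hfg; simpl; [lra|].
  apply Rplus_le_compat; [apply IH; intros j Hj|]; apply Hfg; lia.
Qed.

Lemma sum_lt_nonneg (f : nat -> R) m :
  (forall j, (j < m)%nat -> 0 <= f j) -> 0 <= sum_lt f m.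
Proof.
  intros Hf. replace 0 with (sum_lt (fun _ => 0) m).
  - now apply sum_lt_le.
  - induction m as [|m IH]; simpl; [reflexivity|].
    rewrite IH by (intros; apply Hf; lia); ring.
Qed.

Lemma sum_lt_sqr_le (a : nat -> R) m :
  (sum_lt a m)^2 <= INR m * sum_lt (fun j => (a j)^2) m.
Proof.
  induction m as [|m IH]; cbn [sum_lt]; [simpl; lra|].
  rewrite S_INR.
  set (s := sum_lt a m) in *; set (q := sum_lt (fun j => (a j)^2) m) in *.
  assert (Hq : 0 <= q) by (apply sum_lt_nonneg; intros; apply pow2_ge_0).
  pose proof (pos_INR m) as Hm.
  (* multiplied by m, this is (s - m a_m)^2 >= 0 combined with s^2 <= m q *)
  assert (Hcross : 2 * s * a m <= q + INR m * (a m)^2).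
  { destruct (Rle_lt_or_eq_dec 0 (INR m) Hm) as [Hm0|Hm0].
    - pose proof (pow2_ge_0 (s - INR m * a m)).
      apply (Rmult_le_reg_l (INR m)); [exact Hm0|]. nra.
    - rewrite <- Hm0 in IH |- *. assert (s = 0) by nra. subst s. nra. }
  nra.
Qed.

Lemma sum_lt_sqrt_sqr_le (y : nat -> R) m :
  (forall j, (j < m)%nat -> 0 <= y j) ->
  (sum_lt (fun j => sqrt (y j)) m)^2 <= INR m * sum_lt y m.
Proof.
  intros Hy. rewrite (sum_lt_ext y (fun j => (sqrt (y j))^2) m).
  - apply sum_lt_sqr_le.
  - intros j Hj. rewrite pow2_sqrt by (apply Hy; exact Hj). reflexivity.
Qed.

Lemma rhoE_inner k rho j : (1 <= j <= k)%nat -> rhoE k rho j = rho j.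
Proof.
  intros Hj. destruct j as [|j]; [lia|]. unfold rhoE.
  destruct (Nat.eqb_spec (S j) (S k)); [lia|reflexivity].
Qed.

Lemma rhoE_succ k rho : rhoE k rho (S k) = 0.
Proof. unfold rhoE. now rewrite Nat.eqb_refl. Qed.

Lemma kappa_succ k rho w j :
  kappa k rho w (S j) = kappa k rho w j + wE w j * (1 - (rhoE k rho (S j))^2).
Proof. reflexivity. Qed.

Lemma p_red_succ p n m : p_red p n (S m) = p_red p n m - INR (n (S m)).
Proof. unfold p_red, sum_n1. simpl. ring. Qed.

Section Allocation.

Variables (k : nat) (rho w : nat -> R).

Hypothesis rho_range : forall j, (1 <= j <= k)%nat -> -1 <= rho j <= 1.
Hypothesis w_pos : forall j, (1 <= j <= k)%nat -> 0 < w j.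
Hypothesis rho_abs_decr :
  forall j, (j < k)%nat -> Rabs (rhoE k rho (S j)) < Rabs (rhoE k rho j).

Definition mfmc_term (j : nat) : R :=
  wE w j * ((rhoE k rho j)^2 - (rhoE k rho (S j))^2).

Lemma rhoE_sqr_le1 j : (j <= S k)%nat -> (rhoE k rho j)^2 <= 1.
Proof.
  intros Hj. destruct j as [|j]; [simpl; lra|].
  destruct (Nat.eq_dec j k) as [->|Hjk]; [rewrite rhoE_succ; simpl; lra|].
  rewrite rhoE_inner by lia. destruct (rho_range (S j)); [lia|nra].
Qed.

Lemma rhoE_sqr_decr j : (j <= k)%nat -> (rhoE k rho (S j))^2 <= (rhoE k rho j)^2.
Proof.
  intros Hj. destruct (Nat.eq_dec j k) as [->|Hjk].
  - rewrite rhoE_succ. simpl. nra.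
  - rewrite <- (pow2_abs (rhoE k rho (S j))), <- (pow2_abs (rhoE k rho j)).
    pose proof (Rabs_pos (rhoE k rho (S j))).
    apply pow_incr. pose proof (rho_abs_decr j ltac:(lia)). split; lra.
Qed.

Lemma wE_nonneg j : (j <= k)%nat -> 0 <= wE w j.
Proof. intros Hj. destruct j; simpl; [lra|]. apply Rlt_le, w_pos. lia. Qed.

Lemma mfmc_term_nonneg j : (j <= k)%nat -> 0 <= mfmc_term j.
Proof.
  intros Hj. apply Rmult_le_pos; [now apply wE_nonneg|].
  pose proof (rhoE_sqr_decr j Hj). lra.
Qed.

Lemma mfmc_term_le j :
  (j <= k)%nat -> mfmc_term j <= wE w j * (1 - (rhoE k rho (S j))^2).
Proof.
  intros Hj. apply Rmult_le_compat_l; [now apply wE_nonneg|].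
  pose proof (rhoE_sqr_le1 j ltac:(lia)). lra.
Qed.

Lemma mfmc_term_last_le : mfmc_term k <= wE w k.
Proof.
  unfold mfmc_term. rewrite rhoE_succ.
  rewrite <- (Rmult_1_r (wE w k)) at 2.
  apply Rmult_le_compat_l; [now apply wE_nonneg|].
  pose proof (rhoE_sqr_le1 k ltac:(lia)). simpl. lra.
Qed.

Lemma sum_mfmc_terms_le : sum_lt mfmc_term (S k) <= kappa k rho w k + wE w k.
Proof.
  simpl sum_lt. apply Rplus_le_compat; [|exact mfmc_term_last_le].
  apply sum_lt_le. intros j Hj. apply mfmc_term_le. lia.
Qed.

Lemma MSE_le_sum_mfmc_terms p sigma2 n :
  0 < sigma2 -> 0 < p - sum_n1 n k ->
  MSE k p sigma2 n rho w
  <= sigma2 / (p - sum_n1 n k) * (INR (S k) * sum_lt mfmc_term (S k)).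
Proof.
  intros Hs HD. apply Rmult_le_compat_l.
  - apply Rlt_le, Rdiv_lt_0_compat; assumption.
  - apply sum_lt_sqrt_sqr_le. intros j Hj. apply mfmc_term_nonneg. lia.
Qed.

End Allocation.

Theorem lemma1 (k : nat) (p sigma2 : R) (n : nat -> nat) (rho w : nat -> R)
  (ca cc : nat -> R) (ra rc : nat -> R -> R) :
  (1 <= k)%nat ->
  0 < p ->
  0 < sigma2 ->
  (forall j, (1 <= j <= k)%nat -> (0 < n j)%nat) ->
  0 < p - sum_n1 n k ->
  (forall j, (1 <= j <= k)%nat -> -1 <= rho j <= 1) ->
  (forall j, (1 <= j <= k)%nat -> 0 < w j) ->
  (forall j, (j < k)%nat -> Rabs (rhoE k rho (S j)) < Rabs (rhoE k rho j)) ->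
  (forall j, (1 <= j <= k)%nat ->
     0 < ca j /\ 0 < cc j /\
     (forall x, 0 < x -> 0 < ra j x) /\ nonincreasing_pos (ra j) /\ C2_pos (ra j) /\
     (forall x, 0 < x -> 0 < rc j x) /\ nondecreasing_pos (rc j) /\ C2_pos (rc j) /\
     1 - (rho j)^2 <= ca j * ra j (INR (n j)) /\
     w j <= cc j * rc j (INR (n j))) ->
  MSE k p sigma2 n rho w <=
    INR (S k) * sigma2 / (p_red p n (k - 1) - INR (n k)) *
    (kappa k rho w (k - 1) + wE w (k - 1) * ca k * ra k (INR (n k))
     + cc k * rc k (INR (n k))).
Proof.
  intros Hk _ Hs _ HD Hrho Hw Habs Hr.
  destruct k as [|m]; [lia|]. replace (S m - 1)%nat with m by lia.
  destruct (Hr (S m)) as (_ & _ & _ & _ & _ & _ & _ & _ & Hra & Hrc); [lia|].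
  rewrite <- p_red_succ.
  pose proof (sum_mfmc_terms_le (S m) rho w Hrho Hw) as Hsum.
  rewrite kappa_succ, rhoE_inner in Hsum by lia.
  change (wE w (S m)) with (w (S m)) in Hsum.
  assert (Hlast : wE w m * (1 - rho (S m) ^ 2) <= wE w m * ca (S m) * ra (S m) (INR (n (S m)))).
  { rewrite Rmult_assoc. apply Rmult_le_compat_l; [|exact Hra].
    apply (wE_nonneg (S m)); [exact Hw|lia]. }
  eapply Rle_trans; [apply (MSE_le_sum_mfmc_terms (S m) rho w); assumption|].
  replace (INR (S (S m)) * sigma2 / p_red p n (S m)) with (sigma2 / p_red p n (S m) * INR (S (S m)))
    by (unfold Rdiv; ring).
  rewrite Rmult_assoc. apply Rmult_le_compat_l.
  - apply Rlt_le, Rdiv_lt_0_compat; assumption.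
  - apply Rmult_le_compat_l; [apply pos_INR|lra].
Qed.
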